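(* Let $Z=A\cdot[0,1]^n\subseteq\mathbb{R}^d$ be a unimodular zonotope with matroid $M$. If $M$ has no coloops, then the element $x_0\otimes1$ (i.e. $x_0$) of $\mathcal{H}_Z$ lies in the interior ideal $\widetilde{\mathcal{H}_Z}$. In all cases $x_0^2\otimes1=x_0^2$ lies in $\widetilde{\mathcal{H}_Z}$. (Under the isomorphism $\mathcal{H}_Z\cong\mathbb{C}[z_S:S\subseteq[n]]/I_L^{\mathrm{SE}}$ these elements correspond to $z_\emptyset$ and $z_\emptyset^2$.)
   Context: A unimodular zonotope is $Z=A\cdot[0,1]^n\subseteq\mathbb{R}^d$ with $A$ a $d\times n$ integer matrix of rank $d$ whose maximal minors lie in $\{-1,0,1\}$; $M$ is the matroid of the columns of $A$; a coloop is an element in every basis. For finite $\mathcal{Z}\subseteq\mathbb{Z}^d\subseteq\mathbb{C}^d$, $\operatorname{gr}I(\mathcal{Z})$ is the ideal generated by top-degree components of polynomials vanishing on $\mathcal{Z}$; $I^\perp$ is the Macaulay inverse system. The harmonic algebra is $\mathcal{H}_Z=\bigoplus_{m\ge0}\mathbb{C}x_0^m\otimes(\operatorname{gr}I(mZ\cap\mathbb{Z}^d))^\perp$ and the interior ideal $\widetilde{\mathcal{H}_Z}=\bigoplus_{m\ge1}\mathbb{C}x_0^m\otimes(\operatorname{gr}I(\operatorname{int}(mZ)\cap\mathbb{Z}^d))^\perp$, both inside $\mathbb{C}[x_0,x_1,\dots,x_d]$. The ideal $I_L^{\mathrm{SE}}$ (for $L$ the complexified row space of $A$) is generated by $z_Sz_T-z_{S\cup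 T}z_{S\cap T}$ and the linear forms $\sum_{i\in C}\alpha_{C,i}z_{A'\cup\{i\}}$ for circuits $C$ with dependence $\sum_{i\in C}\alpha_{C,i}A_i=0$ and $A'\subseteq[n]\setminus C$. *)

From Stdlib Require Import Reals.
From HB Require Import structures.
From mathcomp Require Import all_boot all_order all_algebra.
From mathcomp Require Import mpoly.
From mathcomp.real_closed Require Import complex.
From mathcomp Require Import Rstruct.
Set Implicit Arguments. Unset Strict Implicit. Unset Printing Implicit Defensive.
Import Order.TTheory GRing.Theory Num.Theory.
Local Open Scope ring_scope.

Notation CC := (R[i]).

Section Zonotope.
Variables (d n : nat).

Definition unimodular (A : 'M[int]_(d, n)) : Prop :=
  \rank (map_mx (intr : int -> rat) A) = d /\
  forall f : 'I_d -> 'I_n, \det (colsub f A) \in [:: -1; 0; 1].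

(* Bases of the column matroid M: sets of d columns with nonzero minor
   (i.e. d linearly independent columns; rank A = d). *)
Definition col_basis (A : 'M[int]_(d, n)) (B : {set 'I_n}) : Prop :=
  exists f : 'I_d -> 'I_n, B = f @: setT /\ \det (colsub f A) != 0.

Definition coloop (A : 'M[int]_(d, n)) (j : 'I_n) : Prop :=
  forall B, col_basis A B -> j \in B.

(* v is a lattice point of the interior (in R^d) of
   m Z = { A lam | lam in [0,m]^n }. *)
Definition int_pt (A : 'M[int]_(d, n)) (m : nat) (v : 'cV[int]_d) : Prop :=
  exists2 eps : R, 0 < eps &
    forall y : 'cV[R]_d, (forall i, `|y i 0 - (v i 0)%:~R| < eps) ->
      exists lam : 'cV[R]_n,
        (forall j, 0 <= lam j 0 <= m%:R) /\ y = map_mx intr A *m lam.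

End Zonotope.

Section Polys.
Variable d : nat.
Local Notation P := {mpoly CC[d]}.

Definition vanish (S : 'cV[int]_d -> Prop) (p : P) : Prop :=
  forall v, S v -> p.@[fun k => ((v k 0)%:~R : CC)] = 0.

(* Top-degree homogeneous component of p (0 for p = 0). *)
Definition topc (p : P) : P :=
  \sum_(m <- msupp p | mdeg m == (msize p).-1) p@_m *: 'X_[m].

Definition grI (S : 'cV[int]_d -> Prop) (q : P) : Prop :=
  exists s : seq (P * P),
    (forall x, x \in s -> vanish S x.2) /\
    q = \sum_(x <- s) x.1 * topc x.2.

Definition diffop (g f : P) : P :=
  \sum_(m <- msupp g) g@_m *: mderivm m f.

Definition perp (J : P -> Prop) (f : P) : Prop :=
  forall g, J g -> diffop g f = 0.

Definition liftp (p : P) : {mpoly CC[d.+1]} :=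
  p \mPo [tuple 'X_(lift ord0 i) | i < d].

End Polys.

(* The interior ideal  ~H_Z = (+)_{m>=1} C x_0^m (x) (gr I(int(mZ) cap Z^d))^perp
   inside C[x_0, x_1, ..., x_d]. *)
Definition Htilde (d n : nat) (A : 'M[int]_(d, n)) (F : {mpoly CC[d.+1]}) : Prop :=
  exists (N : nat) (f : nat -> {mpoly CC[d]}),
    (forall m : nat, (0 < m)%N -> (m <= N)%N -> perp (grI (int_pt A m)) (f m)) /\
    F = \sum_(1 <= m < N.+1) 'X_ord0 ^+ m * liftp (f m).

(* The constant 1 is annihilated by gr I(S) for every nonempty S: a polynomial
   vanishing at a point has a top component without constant term.  Hence x_0 and
   x_0^2 lie in the interior ideal once int(Z), resp. int(2Z), contains a lattice
   point.  Fix a basis f of M.  A point A lam with lam in [0,m]^n whose f-coordinates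
   lie in (0,m) is interior, since A_f is invertible and its f-coordinates can absorb
   any small perturbation.  For 2Z take lam = 1.  For Z write A = A_f C with C integral
   and C_f = 1; without coloops every row of C has a nonzero entry off f.  Putting the
   lacunary values dl^(j+1) on the coordinates off f makes every entry of C t nonzero
   and of absolute value < 1, so f-coordinates in (0,1) complete t to an integral point. *)

From Stdlib Require Import Reals.
From HB Require Import structures.
From mathcomp Require Import all_boot all_order all_algebra.
From mathcomp Require Import mpoly.
From mathcomp.real_closed Require Import complex.
From mathcomp Require Import Rstruct.
From mathcomp Require Import lra.
Import Order.TTheory GRing.Theory Num.Theory.
Set Implicit Arguments. Unset Strict Implicit. Unset Printing Implicit Defensive.
Local Open Scope ring_scope.

Lemma mderivm1 (R : comNzRingType) (k : nat) (m : 'X_{1..k}) : m != 0%MM ->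
  mderivm m (1 : {mpoly R[k]}) = 0.
Proof.
move=> m_neq0; apply/mpolyP => m'; rewrite mcoeff_mderivm mcoeff1 mcoeff0.
case: eqP => [/(congr1 mdeg)/eqP|]; last by rewrite mul0rn.
by rewrite mdegD mdeg0 addn_eq0 mdeg_eq0 (negbTE m_neq0).
Qed.

Section InverseSystem.
Variables (d : nat) (S : 'cV[int]_d -> Prop) (v : 'cV[int]_d).
Hypothesis Sv : S v.

(* Only a constant has a top component of degree 0, and a constant vanishing at [v] is 0. *)
Lemma mcoeff0_topc p : vanish S p -> (topc p)@_0 = 0.
Proof.
move=> Sp; rewrite /topc raddf_sum /= big_seq_cond big1 // => m /andP[m_supp /eqP m_top].
rewrite mcoeffZ mcoeffX; case: eqP => [m0|]; last by rewrite mulr0.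
have /msize1_polyC p_const : (msize p <= 1)%N.
  by move: m_top; rewrite m0 mdeg0; case: (msize p) => [|[]].
move: m_supp (Sp v Sv); rewrite p_const mevalC => + p0.
by rewrite p0 msupp0.
Qed.

Lemma mcoeff0_grI g : grI S g -> g@_0 = 0.
Proof.
case=> s [Ss ->]; rewrite raddf_sum /= big_seq big1 // => x xs.
by rewrite (rmorphM (mcoeff 0%MM)) /= mcoeff0_topc ?mulr0 //; exact: Ss.
Qed.

Lemma perp_grI1 : perp (grI S) 1.
Proof.
move=> g /mcoeff0_grI g0; rewrite /diffop big_seq big1 // => m m_supp.
rewrite mderivm1 ?scaler0 //; apply: contraTneq m_supp => ->.
by rewrite mcoeff_msupp g0 eqxx.
Qed.

End InverseSystem.

Lemma mulmx_small (R : realFieldType) p q (B : 'M[R]_(p, q)) (g : R) : 0 < g ->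
  exists2 eps : R, 0 < eps &
    forall x : 'cV_q, (forall l, `|x l 0| < eps) -> forall k, `|(B *m x) k 0| < g.
Proof.
move=> g_gt0; pose S : R := \sum_k \sum_l `|B k l|.
have S_ge0 : 0 <= S by apply: sumr_ge0 => k _; apply: sumr_ge0.
have eps_gt0 : 0 < g / (S + 1) by rewrite divr_gt0 // ltr_wpDl.
exists (g / (S + 1)) => // x x_small k.
have row_le_S : \sum_l `|B k l| <= S.
  by rewrite [S](bigD1 k) //= lerDl sumr_ge0 // => *; apply: sumr_ge0.
rewrite mxE; apply: le_lt_trans (ler_norm_sum _ _ _) _.
apply: le_lt_trans (_ : _ <= (\sum_l `|B k l|) * (g / (S + 1))) _.
  by rewrite mulr_suml ler_sum // => l _; rewrite normrM ler_wpM2l // ltW.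
apply: le_lt_trans (ler_wpM2r (ltW eps_gt0) row_le_S) _.
by rewrite mulrA ltr_pdivrMr ?ltr_wpDl // mulrC ltr_pM2l // ltrDl.
Qed.

Lemma colsub_det_inj (R : comNzRingType) d n (A : 'M[R]_(d, n)) (f : 'I_d -> 'I_n) :
  \det (colsub f A) != 0 -> injective f.
Proof.
move=> det_neq0 k k' fkk'; apply/eqP; apply: contraNT det_neq0 => kk'.
by rewrite -det_tr (determinant_alternate kk') // => i; rewrite !mxE fkk'.
Qed.

Section BasisEmbedding.
Variables (R : nzRingType) (d n : nat) (f : 'I_d -> 'I_n).

Lemma colsub1_mulmx_im (u : 'cV[R]_d) k :
  injective f -> (colsub f 1%:M *m u) (f k) 0 = u k 0.
Proof.
move=> f_inj; rewrite mxE (bigD1 k) //= !mxE eqxx mul1r big1 ?addr0 // => k' k'k.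
by rewrite !mxE (inj_eq f_inj) eq_sym (negbTE k'k) mul0r.
Qed.

Lemma colsub1_mulmx_notin (u : 'cV[R]_d) j :
  j \notin codom f -> (colsub f 1%:M *m u) j 0 = 0.
Proof.
move=> j_notin; rewrite mxE big1 // => k _; rewrite !mxE.
case: eqP => [j_fk|]; last by rewrite mul0r.
by rewrite j_fk codom_f in j_notin.
Qed.

End BasisEmbedding.

Lemma int_pt_of_basis_interior d n (A : 'M[int]_(d, n)) (f : 'I_d -> 'I_n)
    (m : nat) (lam : 'cV[R]_n) (v : 'cV[int]_d) :
  \det (colsub f A) != 0 ->
  (forall j, 0 <= lam j 0 <= m%:R) ->
  (forall k, 0 < lam (f k) 0 < m%:R) ->
  map_mx intr A *m lam = map_mx intr v ->
  int_pt A m v.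
Proof.
move=> det_neq0 lam_box lamf_inner Alam.
have f_inj := colsub_det_inj det_neq0.
pose Af := map_mx (intr : int -> R) (colsub f A).
have Af_unit : Af \in unitmx by rewrite unitmxE det_map_mx unitfE intr_eq0.
pose gap := \big[Num.min/1]_k Num.min (lam (f k) 0) (m%:R - lam (f k) 0).
have gap_gt0 : 0 < gap.
  by apply: lt_bigmin => // k _; rewrite lt_min subr_gt0.
have [eps eps_gt0 small] := mulmx_small (invmx Af) gap_gt0.
exists eps => // y y_near.
pose w := invmx Af *m (y - map_mx intr v).
have w_small k : `|w k 0| < gap by apply: small => l; rewrite !mxE; apply: y_near.
exists (lam + colsub f 1%:M *m w); split => [j|].
  rewrite mxE; case: (boolP (j \in codom f)) => [/codomP[k ->]|j_notin].
    have := bigmin_le 1 k (fun k => Num.min (lam (f k) 0) (m%:R - lam (f k) 0)).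
    rewrite -/gap le_min colsub1_mulmx_im // => /andP[gap_le gap_le'].
    by move: (w_small k); rewrite ltr_norml => /andP[? ?]; apply/andP; split; lra.
  by rewrite colsub1_mulmx_notin // addr0.
rewrite mulmxDr Alam mulmxA mulmx_colsub mulmx1.
have -> : colsub f (map_mx intr A) = Af by apply/matrixP => i j; rewrite !mxE.
by rewrite /w mulmxA mulmxV // mul1mx addrC subrK.
Qed.

Section Lacunary.
Variables (R : realFieldType) (dl : R).
Hypotheses (dl_gt0 : 0 < dl) (dl_le1 : dl <= 1).

Lemma ler_norm_lacunary n (c : 'I_n -> R) :
  `|\sum_j c j * dl ^+ j.+1| <= dl * \sum_j `|c j|.
Proof.
apply: le_trans (ler_norm_sum _ _ _) _; rewrite mulr_sumr ler_sum // => j _.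
rewrite normrM (ger0_norm (exprn_ge0 _ (ltW dl_gt0))) mulrC ler_wpM2r //.
by rewrite exprS ler_piMr ?exprn_ile1 ?(ltW dl_gt0).
Qed.

(* If [c ord0 != 0] then [|c ord0| >= 1] beats the tail; otherwise [dl] factors out. *)
Lemma lacunary_sum_neq0 n (c : 'I_n -> R) :
  (forall j, c j != 0 -> 1 <= `|c j|) -> 0 < \sum_j `|c j| ->
  dl * \sum_j `|c j| < 1 -> \sum_j c j * dl ^+ j.+1 != 0.
Proof.
elim: n c => [|n IHn] c c_int; first by rewrite big_ord0 ltxx.
rewrite !big_ord_recl /= => c_gt0 c_small.
pose c' j := c (lift ord0 j).
have -> : c ord0 * dl ^+ 1 + \sum_(j < n) c (lift ord0 j) * dl ^+ (bump 0 j).+1 =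
          dl * (c ord0 + \sum_j c' j * dl ^+ j.+1).
  rewrite mulrDr mulr_sumr expr1 mulrC; congr (_ + _).
  by apply: eq_bigr => j _; rewrite exprS mulrCA.
rewrite mulf_neq0 ?(gt_eqF dl_gt0) //.
have c'_small : dl * \sum_j `|c' j| < 1.
  by apply: le_lt_trans c_small; rewrite ler_wpM2l ?(ltW dl_gt0) // lerDr.
case: (eqVneq (c ord0) 0) => [c0|c0_neq0].
  rewrite c0 normr0 add0r in c_gt0; rewrite c0 add0r.
  by apply: IHn => // j; apply: c_int.
apply: contraTneq (c_int _ c0_neq0) => /eqP; rewrite addr_eq0 => /eqP ->.
by rewrite normrN -ltNge (le_lt_trans (ler_norm_lacunary c')).
Qed.

Lemma mulmx_lacunary_frac d n (C : 'M[int]_(d, n)) (T : pred 'I_n) i :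
  dl * \sum_i \sum_j `|(C i j)%:~R : R| < 1 -> (exists2 j, T j & C i j != 0) ->
  0 < `|(map_mx intr C *m \col_j (if T j then dl ^+ j.+1 else 0)) i 0| < 1.
Proof.
move=> dl_small [j1 Tj1 Cij1_neq0].
pose c j : R := if T j then (C i j)%:~R else 0.
have -> : (map_mx intr C *m \col_j (if T j then dl ^+ j.+1 else 0)) i 0 =
          \sum_j c j * dl ^+ j.+1.
  rewrite mxE; apply: eq_bigr => j _; rewrite !mxE /c.
  by case: (T j); rewrite ?mulr0 ?mul0r.
have c_small : dl * \sum_j `|c j| < 1.
  apply: le_lt_trans dl_small; rewrite ler_wpM2l ?(ltW dl_gt0) //.
  rewrite [leRHS](bigD1 i) //= ler_wpDr //.
    by apply: sumr_ge0 => ? _; apply: sumr_ge0.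
  by apply: ler_sum => j _; rewrite /c; case: (T j); rewrite ?normr0.
apply/andP; split; last exact: le_lt_trans (ler_norm_lacunary c) c_small.
rewrite normr_gt0 lacunary_sum_neq0 //.
- move=> j; rewrite /c; case: (T j); rewrite ?eqxx //.
  by rewrite intr_eq0 -intr_norm ler1z -gtz0_ge1 normr_gt0.
- by rewrite (bigD1 j1) //= ltr_wpDr ?sumr_ge0 // /c Tj1 normr_gt0 intr_eq0.
Qed.

End Lacunary.

Lemma unimodular_has_basis d n (A : 'M[int]_(d, n)) : unimodular A ->
  exists f : 'I_d -> 'I_n, \det (colsub f A) != 0.
Proof.
case=> rankA _; pose Aq := map_mx (intr : int -> rat) A.
have Aq_full : row_full Aq^T by rewrite /row_full mxrank_tr rankA.
exists (fullrankfun Aq_full).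
have := fullrowsub_unit Aq_full; rewrite unitmxE unitfE.
suff -> : rowsub (fullrankfun Aq_full) Aq^T =
          (map_mx intr (colsub (fullrankfun Aq_full) A))^T.
  by rewrite det_tr det_map_mx intr_eq0.
by apply/matrixP => i j; rewrite !mxE.
Qed.

Lemma unimodular_det_sqr d n (A : 'M[int]_(d, n)) (f : 'I_d -> 'I_n) :
  unimodular A -> \det (colsub f A) != 0 -> \det (colsub f A) ^+ 2 = 1.
Proof. by case=> _ /(_ f); rewrite !inE => /or3P[] /eqP ->. Qed.

Lemma unimodular_int_pt2 d n (A : 'M[int]_(d, n)) : unimodular A -> exists v, int_pt A 2 v.
Proof.
move=> /unimodular_has_basis[f det_neq0]; exists (A *m const_mx 1).
apply: (int_pt_of_basis_interior (lam := const_mx 1) det_neq0).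
- by move=> j; rewrite mxE ler01 ler1n.
- by move=> k; rewrite mxE ltr01 ltr1n.
- by rewrite map_mxM map_const_mx rmorph1.
Qed.

Section BasisCoordinates.
Variables (d n : nat) (A : 'M[int]_(d, n)) (f : 'I_d -> 'I_n).
Hypothesis det_sqr : \det (colsub f A) ^+ 2 = 1.

(* [det *: adj] is the inverse of the basis matrix, integral since [det = +-1]. *)
Definition basis_coords : 'M[int]_(d, n) :=
  (\det (colsub f A) *: \adj (colsub f A)) *m A.

Lemma colsub_basis_coords : colsub f basis_coords = 1%:M.
Proof.
by rewrite -mulmx_colsub -scalemxAl mul_adj_mx scale_scalar_mx -expr2 det_sqr.
Qed.

Lemma basis_coords_basis i k : basis_coords i (f k) = (i == k)%:R.
Proof.
have := congr1 (fun M : 'M_d => M i k) colsub_basis_coords.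
by rewrite mxE => ->; rewrite mxE.
Qed.

Lemma basis_coordsK : colsub f A *m basis_coords = A.
Proof.
by rewrite mulmxA -scalemxAr mul_mx_adj scale_scalar_mx -expr2 det_sqr mul1mx.
Qed.

Lemma coloop_of_basis_coords_row i :
  (forall j, j \notin codom f -> basis_coords i j = 0) -> coloop A (f i).
Proof.
move=> row_i_in_basis B [g [-> det_g_neq0]].
apply: contraTT det_g_neq0 => fi_notin_g; rewrite negbK; apply/eqP.
have -> : colsub g A = colsub f A *m colsub g basis_coords.
  by rewrite mulmx_colsub basis_coordsK.
rewrite det_mulmx [\det (colsub g _)](expand_det_row _ i).
rewrite big1 ?mulr0 // => k _; rewrite mxE.
case: (boolP (g k \in codom f)) => [/codomP[k' gk]|/row_i_in_basis ->]; last first.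
  by rewrite mul0r.
rewrite [g k]gk basis_coords_basis; case: eqP => [ik'|]; last by rewrite mul0r.
by rewrite ik' -gk imset_f ?inE in fi_notin_g.
Qed.

Lemma int_pt1_of_offbasis (t : 'cV[R]_n) (z : 'cV[int]_d) :
  (forall j, 0 <= t j 0 <= 1) -> (forall k, t (f k) 0 = 0) ->
  (forall i, 0 < (z i 0)%:~R - (map_mx intr basis_coords *m t) i 0 < 1) ->
  int_pt A 1 (colsub f A *m z).
Proof.
move=> t_box t_basis z_frac.
have det_neq0 : \det (colsub f A) != 0.
  by apply: contra_eq_neq det_sqr => ->; rewrite expr0n.
have f_inj := colsub_det_inj det_neq0.
pose u := map_mx intr z - map_mx intr basis_coords *m t.
have u_frac k : 0 < u k 0 < 1.
  suff -> : u k 0 = (z k 0)%:~R - (map_mx intr basis_coords *m t) k 0 by [].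
  by rewrite !mxE.
apply: (int_pt_of_basis_interior (lam := t + colsub f 1%:M *m u) det_neq0).
- move=> j; rewrite mxE; case: (boolP (j \in codom f)) => [/codomP[k ->]|j_notin].
    rewrite t_basis colsub1_mulmx_im // add0r.
    by case/andP: (u_frac k) => *; apply/andP; split; lra.
  by rewrite colsub1_mulmx_notin // addr0.
- by move=> k; rewrite mxE t_basis colsub1_mulmx_im // add0r.
have -> : map_mx intr A =
          map_mx intr (colsub f A) *m map_mx (intr : int -> R) basis_coords.
  by rewrite -map_mxM basis_coordsK.
rewrite [map_mx _ (_ *m z)]map_mxM -mulmxA; congr (_ *m _).
rewrite mulmxDr mulmxA mulmx_colsub mulmx1 -map_mxsub colsub_basis_coords.
by rewrite map_mx1 mul1mx /u addrC subrK.
Qed.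

End BasisCoordinates.

Lemma no_coloop_int_pt1 d n (A : 'M[int]_(d, n)) :
  unimodular A -> (forall j, ~ coloop A j) -> exists v, int_pt A 1 v.
Proof.
move=> unimA no_coloop; have [f det_neq0] := unimodular_has_basis unimA.
have det_sqr := unimodular_det_sqr unimA det_neq0.
pose C := basis_coords A f.
have C_offbasis i : exists2 j, j \notin codom f & C i j != 0.
  case: (boolP [exists j, (j \notin codom f) && (C i j != 0)]).
    by case/existsP => j /andP[]; exists j.
  move/existsPn => C_in_basis; case: (no_coloop (f i)).
  apply: coloop_of_basis_coords_row => // j j_notin.
  by apply/eqP; move: (C_in_basis j); rewrite j_notin negbK.
pose K : R := \sum_i \sum_j `|(C i j)%:~R : R|.
have K_ge0 : 0 <= K by apply: sumr_ge0 => i _; apply: sumr_ge0.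
pose dl := (K + 2)^-1.
have dl_gt0 : 0 < dl by rewrite invr_gt0; lra.
have dl_le1 : dl <= 1 by rewrite invf_le1; lra.
have dl_small : dl * K < 1 by rewrite mulrC ltr_pdivrMr; lra.
pose t : 'cV[R]_n := \col_j (if j \notin codom f then dl ^+ j.+1 else 0).
have s_frac i := mulmx_lacunary_frac dl_gt0 dl_le1 dl_small (C_offbasis i).
pose z : 'cV[int]_d := \col_i ((0 < (map_mx (intr : int -> R) C *m t) i 0)%R)%:R.
exists (colsub f A *m z); apply: (int_pt1_of_offbasis det_sqr (t := t)) => //.
- move=> j; rewrite mxE; case: ifP => _; rewrite ?lexx ?ler01 //.
  by rewrite exprn_ge0 ?exprn_ile1 ?(ltW dl_gt0).
- by move=> k; rewrite mxE codom_f.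
move=> i; rewrite [z i 0]mxE -/C; have := s_frac i; rewrite -/t.
set s : R := (map_mx intr C *m t) i 0.
case: (ltrP 0 s) => [s_gt0|s_le0] /=.
  by rewrite gtr0_norm // rmorph1 subr_gt0 gtrBl s_gt0 andbT => /andP[].
by rewrite ler0_norm // rmorph0 sub0r.
Qed.

Theorem lemma6p3 (d n : nat) (A : 'M[int]_(d, n)) :
  unimodular A ->
  ((forall j : 'I_n, ~ coloop A j) -> Htilde A ('X_ord0 : {mpoly CC[d.+1]})) /\
  Htilde A (('X_ord0 : {mpoly CC[d.+1]}) ^+ 2).
Proof.
move=> unimA; split=> [no_coloop|].
  have [v v_int] := no_coloop_int_pt1 unimA no_coloop.
  exists 1%N, (fun _ => 1); split.
    by move=> m m_gt0 m_le1; rewrite (@anti_leq m 1) ?m_le1 //; apply: perp_grI1 v_int.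
  by rewrite big_nat1 expr1 /liftp rmorph1 mulr1.
have [v v_int] := unimodular_int_pt2 unimA.
exists 2%N, (fun m => (m == 2%N)%:R); split.
  move=> m _ _; case: eqP => [->|_]; first exact: perp_grI1 v_int.
  by move=> g _; rewrite /diffop big1 // => mm _; rewrite raddf0 scaler0.
by rewrite big_ltn // big_nat1 /liftp /= rmorph0 rmorph1 mulr0 mulr1 add0r.
Qed.
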